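(* Suppose the graph is complete with $a_{ij}=a>0$ for all $i\neq j$. Consider the $N$ iOFP systems (some constant $\sigma\in\mathbb R$) with exosystem disturbances as in the context. Attach to each edge $g=1,\dots,E$ a passive system $\dot\eta_g=\psi_g(\eta_g,\varrho_g)$, $v_{1g}=\varphi_g(\eta_g,\varrho_g)$, $\varrho_g=\sum_j b_{jg}y_j$, $\psi_g$ locally Lipschitz, $\varphi_g$ continuous, with a positive definite $\Psi_g$ satisfying $\dot\Psi_g(\eta_g)\le v_{1g}^\top\varrho_g$. With $\rho_i=\sum_j a_{ij}(y_j-y_i)$ apply $$\dot\xi_i=s_i(\xi_i)-R_i^\top\rho_i,\quad \dot\kappa_g=\delta_g\varrho_g^\top\varrho_g\ (\delta_g>0),\quad v_{2g}=\kappa_g\varrho_g,\quad u_i=-R_i\xi_i-\sum_{g=1}^E b_{ig}(v_{1g}+v_{2g}).$$ If the closed-loop solution $(x,\eta,\xi,\kappa)$ is bounded, then the outputs synchronize asymptotically: $\lim_{t\to\infty}\|y_i(t)-y_j(t)\|=0$ for all $i,j$.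
   Context: Systems $\dot x_i=f(x_i,u_i,d_i)$, $y_i=h(x_i)$, $x_i\in\mathbb R^n$, $u_i,y_i,d_i\in\mathbb R^q$, $f$ locally Lipschitz, $h$ continuously differentiable. iOFP with constant $\sigma\in\mathbb R$: there exist continuously differentiable $\Phi\ge0$ and class-$\mathcal K_\infty$ $\underline\alpha,\overline\alpha$ with $\underline\alpha(\|x_i-x_i'\|)\le\Phi(x_i,x_i')\le\overline\alpha(\|x_i-x_i'\|)$ and $\frac{\partial\Phi}{\partial x_i}f(x_i,u_i,d_i)+\frac{\partial\Phi}{\partial x_i'}f(x_i',u_i',d_i')\le\sigma\|y_i-y_i'\|^2+(y_i-y_i')^\top((u_i+d_i)-(u_i'+d_i'))$. Exosystems: $\dot w_i=s_i(w_i)$, $d_i=R_iw_i$, $w_i\in\mathbb R^{m_i}$, $s_i$ locally Lipschitz, $s_i(0)=0$, $(w_i-w_i')^\top(s_i(w_i)-s_i(w_i'))\le0$. Incidence matrix $B\in\mathbb R^{N\times E}$: for the $g$-th edge $(i,j)$, $b_{ig}=-\sqrt{a_{ij}}$, $b_{jg}=\sqrt{a_{ij}}$, other entries zero. *)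

From mathcomp Require Import all_boot.
From Stdlib Require Import Reals.
Set Implicit Arguments. Unset Strict Implicit.
Open Scope R_scope.

Definition vec (n : nat) := 'I_n -> R.
Definition rsum (n : nat) (F : 'I_n -> R) : R := \big[Rplus/R0]_(k < n) F k.
Definition dot n (u v : vec n) : R := rsum (fun k => u k * v k).
Definition vnorm n (v : vec n) : R := sqrt (dot v v).
Definition vsub n (u v : vec n) : vec n := fun k => u k - v k.
Definition vadd n (u v : vec n) : vec n := fun k => u k + v k.
Definition vzero n : vec n := fun _ => 0.
Definition matvec q m (M : 'I_q -> 'I_m -> R) (w : vec m) : vec q :=
  fun k => rsum (fun l => M k l * w l).
Definition matTvec q m (M : 'I_q -> 'I_m -> R) (v : vec q) : vec m :=
  fun l => rsum (fun k => M k l * v k).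
Definition vupd n (x : vec n) (k : 'I_n) (s : R) : vec n :=
  fun j => if j == k then s else x j.

Definition cont_map n m (F : vec n -> vec m) :=
  forall x eps, 0 < eps -> exists dl, 0 < dl /\
    forall x', vnorm (vsub x' x) < dl -> vnorm (vsub (F x') (F x)) < eps.
Definition cont_map2 n p m (F : vec n -> vec p -> vec m) :=
  forall x y eps, 0 < eps -> exists dl, 0 < dl /\
    forall x' y', vnorm (vsub x' x) + vnorm (vsub y' y) < dl ->
      vnorm (vsub (F x' y') (F x y)) < eps.

Definition loclip1 n m (F : vec n -> vec m) :=
  forall x0, exists r L, 0 < r /\
    forall x x', vnorm (vsub x x0) < r -> vnorm (vsub x' x0) < r ->
      vnorm (vsub (F x) (F x')) <= L * vnorm (vsub x x').
Definition loclip2 n p m (F : vec n -> vec p -> vec m) :=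
  forall x0 y0, exists r L, 0 < r /\
    forall x y x' y',
      vnorm (vsub x x0) + vnorm (vsub y y0) < r ->
      vnorm (vsub x' x0) + vnorm (vsub y' y0) < r ->
      vnorm (vsub (F x y) (F x' y')) <= L * (vnorm (vsub x x') + vnorm (vsub y y')).
Definition loclip3 n p r m (F : vec n -> vec p -> vec r -> vec m) :=
  forall x0 y0 z0, exists rad L, 0 < rad /\
    forall x y z x' y' z',
      vnorm (vsub x x0) + vnorm (vsub y y0) + vnorm (vsub z z0) < rad ->
      vnorm (vsub x' x0) + vnorm (vsub y' y0) + vnorm (vsub z' z0) < rad ->
      vnorm (vsub (F x y z) (F x' y' z')) <=
        L * (vnorm (vsub x x') + vnorm (vsub y y') + vnorm (vsub z z')).

Definition is_C1_grad n (F : vec n -> R) (G : vec n -> vec n) :=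
  (forall x k, derivable_pt_lim (fun s => F (vupd x k s)) (x k) (G x k)) /\
  cont_map G.
Definition is_C1_grad2 n (F : vec n -> vec n -> R) (G1 G2 : vec n -> vec n -> vec n) :=
  (forall x x' k, derivable_pt_lim (fun s => F (vupd x k s) x') (x k) (G1 x x' k)) /\
  (forall x x' k, derivable_pt_lim (fun s => F x (vupd x' k s)) (x' k) (G2 x x' k)) /\
  cont_map2 G1 /\ cont_map2 G2.
Definition C1map n q (h : vec n -> vec q) :=
  forall j, exists G, is_C1_grad (fun x => h x j) G.

Definition classKinf (al : R -> R) :=
  al 0 = 0 /\
  (forall s t, 0 <= s -> s < t -> al s < al t) /\
  (forall s, 0 <= s -> forall eps, 0 < eps -> exists dl, 0 < dl /\
     forall s', 0 <= s' -> Rabs (s' - s) < dl -> Rabs (al s' - al s) < eps) /\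
  (forall M, exists s, 0 <= s /\ M < al s).

Definition iOFP n q (f : vec n -> vec q -> vec q -> vec n) (h : vec n -> vec q) (sigma : R) :=
  exists (Phi : vec n -> vec n -> R) (G1 G2 : vec n -> vec n -> vec n) (al_lo al_hi : R -> R),
    is_C1_grad2 Phi G1 G2 /\ classKinf al_lo /\ classKinf al_hi /\
    (forall x x', 0 <= Phi x x' /\
       al_lo (vnorm (vsub x x')) <= Phi x x' /\ Phi x x' <= al_hi (vnorm (vsub x x'))) /\
    (forall x x' u u' d d',
       dot (G1 x x') (f x u d) + dot (G2 x x') (f x' u' d') <=
       sigma * dot (vsub (h x) (h x')) (vsub (h x) (h x'))
       + dot (vsub (h x) (h x')) (vsub (vadd u d) (vadd u' d'))).

Definition exo_ok m (s : vec m -> vec m) :=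
  loclip1 s /\ (forall k, s (@vzero m) k = 0) /\
  (forall w w', dot (vsub w w') (vsub (s w) (s w')) <= 0).

(* passive edge system  eta' = psi(eta, rho), v = phi(eta, rho) *)
Definition passive_edge p q (psi : vec p -> vec q -> vec p) (phi : vec p -> vec q -> vec q) :=
  loclip2 psi /\ cont_map2 phi /\
  exists (Psi : vec p -> R) (G : vec p -> vec p),
    is_C1_grad Psi G /\ Psi (@vzero p) = 0 /\
    (forall e, (exists k, e k <> 0) -> 0 < Psi e) /\
    (forall e r, dot (G e) (psi e r) <= dot (phi e r) r).

(* the E edges of the complete graph on N nodes, each unordered pair exactly once,
   with an (arbitrary) orientation ends g = (i, j) *)
Definition complete_edges N E (ends : 'I_E -> 'I_N * 'I_N) :=
  (forall g, (ends g).1 <> (ends g).2) /\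
  (forall i j : 'I_N, i <> j -> exists g, ends g = (i, j) \/ ends g = (j, i)) /\
  (forall g g', ends g = ends g' \/ ends g = ((ends g').2, (ends g').1) -> g = g').

Definition adjw N (a : R) (i j : 'I_N) : R := if i == j then 0 else a.
Definition incid N E (a : R) (ends : 'I_E -> 'I_N * 'I_N) (i : 'I_N) (g : 'I_E) : R :=
  if i == (ends g).1 then - sqrt a else if i == (ends g).2 then sqrt a else 0.

Definition has_deriv n (z : R -> vec n) (t : R) (v : vec n) :=
  forall k, derivable_pt_lim (fun s => z s k) t (v k).

(* For i <> j the complete graph has an edge g joining them, with rho_g = +-sqrt a (y_j - y_i),
   so the adaptive gain satisfies d/dt kappa_g = delta_g a |y_i - y_j|^2 >= 0.  Since kappa_g is
   bounded, |y_i - y_j|^2 is integrable in time.  Boundedness of the closed loop also bounds u_i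
   and d_i, hence dx_i/dt, so y_i = h(x_i) is Lipschitz in time (h is C^1, hence Lipschitz on
   bounded sets, which follows from local bounds by Cousin's lemma on boxes).  Thus
   |y_i - y_j|^2 is uniformly continuous, and Barbalat's lemma sends it to 0. *)

From HB Require Import structures.
From mathcomp Require Import all_boot.
From Stdlib Require Import Reals Lra FunctionalExtensionality Classical.
Open Scope R_scope.
Set Implicit Arguments. Unset Strict Implicit.

HB.instance Definition _ := Monoid.isComLaw.Build R R0 Rplus
  (fun a b c => esym (Rplus_assoc a b c)) Rplus_comm Rplus_0_l.

Lemma rsum_le n (F G : 'I_n -> R) : (forall k, F k <= G k) -> rsum F <= rsum G.
Proof. by move=> H; apply: (big_ind2 (fun a b => a <= b)) => *; lra || apply: H. Qed.

Lemma rsum_ge0 n (F : 'I_n -> R) : (forall k, 0 <= F k) -> 0 <= rsum F.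
Proof. by move=> H; apply: (big_ind (fun a => 0 <= a)) => *; lra || apply: H. Qed.

Lemma Rabs_rsum_le n (F : 'I_n -> R) : Rabs (rsum F) <= rsum (fun k => Rabs (F k)).
Proof.
apply: (big_ind2 (fun a b => Rabs a <= b)) => [|a b c e H1 H2|k _].
- rewrite Rabs_R0; lra.
- have := Rabs_triang a c; lra.
- lra.
Qed.

Lemma rsumD n (F G : 'I_n -> R) : rsum (fun k => F k + G k) = rsum F + rsum G.
Proof. exact: big_split. Qed.

Lemma rsum_mull n c (F : 'I_n -> R) : rsum (fun k => c * F k) = c * rsum F.
Proof. by apply: (big_ind2 (fun a b => a = c * b)) => [|a b e f -> ->|k _]; lra. Qed.

Lemma rsumB n (F G : 'I_n -> R) : rsum (fun k => F k - G k) = rsum F - rsum G.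
Proof.
have : rsum (fun k => F k - G k) + rsum G = rsum F.
  by rewrite -rsumD; apply: eq_bigr => k _; ring.
lra.
Qed.

Lemma rsum_const n c : rsum (fun _ : 'I_n => c) = INR n * c.
Proof.
rewrite /rsum big_const_ord; elim: n => [|n IH]; first by rewrite /=; lra.
by rewrite S_INR iterS IH; ring.
Qed.

Lemma rsum_delta n (k0 : 'I_n) c : rsum (fun k => if k == k0 then c else 0) = c.
Proof. by rewrite /rsum (bigD1 k0) //= eqxx big1 => [|k /negbTE ->]; lra. Qed.

Lemma rsum_ge_term n (F : 'I_n -> R) k0 : (forall k, 0 <= F k) -> F k0 <= rsum F.
Proof.
move=> H; rewrite /rsum (bigD1 k0) //=; set rest := \big[_/_]_(_ | _) _.
have : 0 <= rest by apply: (big_ind (fun a => 0 <= a)) => *; lra || apply: H.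
lra.
Qed.

Lemma derivable_pt_lim_rsum n (F : 'I_n -> R -> R) (F' : 'I_n -> R) t :
  (forall k, derivable_pt_lim (F k) t (F' k)) ->
  derivable_pt_lim (fun s => rsum (fun k => F k s)) t (rsum F').
Proof.
rewrite /rsum => H; elim: (index_enum _) => [|k r IH].
  have -> : (fun s => \big[Rplus/R0]_(k <- [::]) F k s) = fun _ => 0.
    by apply: functional_extensionality => s; rewrite big_nil.
  by rewrite big_nil; apply: derivable_pt_lim_const.
have -> : (fun s => \big[Rplus/R0]_(l <- k :: r) F l s) =
          fun s => F k s + \big[Rplus/R0]_(l <- r) F l s.
  by apply: functional_extensionality => s; rewrite big_cons.
by rewrite big_cons; apply: derivable_pt_lim_plus.
Qed.

Definition norm1 n (v : vec n) := rsum (fun k => Rabs (v k)).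
Definition box n (B : R) (v : vec n) := forall k, Rabs (v k) <= B.

Lemma dot_ge0 n (v : vec n) : 0 <= dot v v.
Proof. by apply: rsum_ge0 => k; nra. Qed.

Lemma vnorm_ge0 n (v : vec n) : 0 <= vnorm v.
Proof. exact: sqrt_pos. Qed.

Lemma Rabs_le_vnorm n (v : vec n) k : Rabs (v k) <= vnorm v.
Proof.
rewrite /vnorm -sqrt_Rsqr_abs; apply: sqrt_le_1_alt.
by rewrite /Rsqr; apply: (@rsum_ge_term _ (fun k => v k * v k)) => l; nra.
Qed.

Lemma box_of_vnorm n (v : vec n) B : vnorm v <= B -> box B v.
Proof. by move=> H k; apply: Rle_trans (Rabs_le_vnorm v k) H. Qed.

Lemma box_le n B B' (v : vec n) : box B v -> B <= B' -> box B' v.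
Proof. by move=> H HB k; apply: Rle_trans (H k) HB. Qed.

Lemma norm1_le_box n B (v : vec n) : box B v -> norm1 v <= INR n * B.
Proof. by move=> H; rewrite -rsum_const; apply: rsum_le. Qed.

Lemma vnorm_le_norm1 n (v : vec n) : vnorm v <= norm1 v.
Proof.
have H0 : 0 <= norm1 v by apply: rsum_ge0 => k; apply: Rabs_pos.
rewrite /vnorm -(sqrt_square (norm1 v)) //; apply: sqrt_le_1_alt.
rewrite -rsum_mull; apply: rsum_le => k.
have Hk : Rabs (v k) <= norm1 v.
  by apply: (@rsum_ge_term _ (fun k => Rabs (v k))) => l; apply: Rabs_pos.
have -> : v k * v k = Rabs (v k) * Rabs (v k).
  by rewrite -Rabs_mult Rabs_right //; apply: Rle_ge; nra.
have := Rabs_pos (v k); nra.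
Qed.

Lemma vnorm_le_box n B (v : vec n) : box B v -> vnorm v <= INR n * B.
Proof. by move=> H; apply: Rle_trans (vnorm_le_norm1 v) (norm1_le_box H). Qed.

Lemma vnorm_sub_diag n (v : vec n) : vnorm (vsub v v) = 0.
Proof.
rewrite /vnorm; have -> : dot (vsub v v) (vsub v v) = rsum (fun _ : 'I_n => 0).
  by apply: eq_bigr => k _; rewrite /vsub; ring.
by rewrite rsum_const Rmult_0_r sqrt_0.
Qed.

Lemma Rabs_le_bounds x y : Rabs x <= y -> - y <= x <= y.
Proof. by move=> H; have := Rle_abs x; have := Rle_abs (- x); rewrite Rabs_Ropp; lra. Qed.

Lemma MVT_lower (F F' : R -> R) t t' m : t <= t' ->
  (forall c, t <= c <= t' -> derivable_pt_lim F c (F' c) /\ m <= F' c) ->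
  m * (t' - t) <= F t' - F t.
Proof.
move=> Htt H; case: (Rle_lt_or_eq_dec _ _ Htt) => [Hlt|<-]; last by rewrite !Rminus_diag; lra.
have [c [-> Hc]] : exists c, F t' - F t = F' c * (t' - t) /\ t < c < t'.
  by apply: MVT_cor2 => // c Hc; apply: (proj1 (H c _)).
by apply: Rmult_le_compat_r; [lra | apply: (proj2 (H c _)); lra].
Qed.

Lemma MVT_upper (F F' : R -> R) t t' m : t <= t' ->
  (forall c, t <= c <= t' -> derivable_pt_lim F c (F' c) /\ F' c <= m) ->
  F t' - F t <= m * (t' - t).
Proof.
move=> Htt H.
suff : - m * (t' - t) <= - F t' - - F t by lra.
apply: (@MVT_lower (fun s => - F s) (fun s => - F' s)) => // c Hc.
have [HD Hm] := H c Hc; split; [exact: derivable_pt_lim_opp | lra].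
Qed.

Lemma MVT_Rabs_le (F F' : R -> R) t t' L :
  (forall c, Rmin t t' <= c <= Rmax t t' -> derivable_pt_lim F c (F' c) /\ Rabs (F' c) <= L) ->
  Rabs (F t - F t') <= L * Rabs (t - t').
Proof.
wlog Htt : t t' / t <= t'.
  move=> Hw H; case: (Rle_dec t t') => [|/Rnot_le_lt] Ht; first exact: Hw.
  rewrite Rabs_minus_sym (Rabs_minus_sym t); apply: Hw; first lra.
  by rewrite Rmin_comm Rmax_comm.
rewrite Rmin_left // Rmax_right // => H.
have Hbd c : t <= c <= t' -> derivable_pt_lim F c (F' c) /\ - L <= F' c <= L.
  by move=> Hc; have [HD HL] := H c Hc; split; last exact: Rabs_le_bounds.
have := MVT_lower Htt (fun c Hc => conj (proj1 (Hbd c Hc)) (proj1 (proj2 (Hbd c Hc)))).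
have := MVT_upper Htt (fun c Hc => conj (proj1 (Hbd c Hc)) (proj2 (proj2 (Hbd c Hc)))).
rewrite Rabs_minus_sym (Rabs_minus_sym t) (Rabs_right (t' - t)); last lra.
by move=> *; apply: Rabs_le; lra.
Qed.

Definition lipschitz_after (t0 L : R) (F : R -> R) :=
  forall t t', t0 <= t -> t0 <= t' -> Rabs (F t - F t') <= L * Rabs (t - t').

Lemma lipschitz_after_of_deriv t0 L (F F' : R -> R) :
  (forall t, t0 <= t -> derivable_pt_lim F t (F' t) /\ Rabs (F' t) <= L) ->
  lipschitz_after t0 L F.
Proof.
move=> H t t' Ht Ht'; apply: MVT_Rabs_le => c Hc; apply: H.
by have := Rmin_glb t t' t0 Ht Ht'; lra.
Qed.

Lemma barbalat (F Z : R -> R) t0 c L B : 0 < c ->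
  (forall t, t0 <= t -> derivable_pt_lim F t (c * Z t)) ->
  (forall t, t0 <= t -> 0 <= Z t) ->
  lipschitz_after t0 L Z ->
  (forall t, t0 <= t -> F t <= B) ->
  forall e, 0 < e -> exists T, t0 <= T /\ forall t, T <= t -> Z t < e.
Proof.
move=> Hc HF HZ0 HZ HB e He.
have F_mono t t' : t0 <= t -> t <= t' -> F t <= F t'.
  move=> Ht Htt'; suff : 0 * (t' - t) <= F t' - F t by lra.
  apply: MVT_lower => // s Hs; split; first by apply: HF; lra.
  by have := HZ0 s ltac:(lra); nra.
have [S [S_ub S_lub]] : {S | is_lub (fun v => exists t, t0 <= t /\ v = F t) S}.
  apply: completeness; first by exists B => _ [t [Ht ->]]; apply: HB.
  by exists (F t0), t0; split; [lra|].
pose Lp := Rabs L + 1; pose tau := e / (2 * Lp); pose gain := c * (e / 2) * tau.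
have HLp : 0 < Lp by have := Rabs_pos L; rewrite /Lp; lra.
have Htau : 0 < tau by apply: Rdiv_lt_0_compat; lra.
have Hgain : 0 < gain by apply: Rmult_lt_0_compat => //; apply: Rmult_lt_0_compat; lra.
have [t1 [Ht1 HFt1]] : exists t1, t0 <= t1 /\ S - gain < F t1.
  apply: NNPP => Hn; suff : S <= S - gain by lra.
  apply: S_lub => _ [t [Ht ->]]; apply: Rnot_lt_le => Hlt; apply: Hn; by exists t.
exists t1; split => // t Ht; apply: Rnot_le_lt => HZt.
(* a large value of Z persists for a time tau, during which F gains more than S allows *)
have Z_large s : t <= s <= t + tau -> e / 2 <= Z s.
  move=> Hs; have := HZ t s ltac:(lra) ltac:(lra).
  rewrite (Rabs_minus_sym t s) (Rabs_right (s - t)); last lra.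
  have HLtau : Lp * tau = e / 2 by rewrite /tau; field; lra.
  have : L * (s - t) <= Lp * tau.
    by have := Rle_abs L; have := Rabs_pos L; rewrite /Lp; nra.
  by have := Rle_abs (Z t - Z s); lra.
have := @MVT_lower F (fun s => c * Z s) t (t + tau) (c * (e / 2)) ltac:(lra).
move=> /(_ (fun s Hs => conj (HF s ltac:(lra))
           (Rmult_le_compat_l _ _ _ (Rlt_le _ _ Hc) (Z_large s Hs)))).
rewrite (_ : t + tau - t = tau); last ring.
have : F (t + tau) <= S by apply: S_ub; exists (t + tau); split; [lra|].
have := F_mono t1 t Ht1 Ht; move: HFt1; rewrite /gain; lra.
Qed.

Lemma exists_uniform_bound (I : finType) (P : I -> R -> Prop) :
  (forall i B B', P i B -> B <= B' -> P i B') -> (forall i, exists B, P i B) ->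
  exists B, 0 <= B /\ forall i, P i B.
Proof.
move=> Pmono HP; suff [B [HB0 HB]] : exists B, 0 <= B /\ forall i, i \in enum I -> P i B.
  by exists B; split => // i; apply: HB; rewrite mem_enum.
elim: (enum I) => [|i0 s [B [HB0 HB]]]; first by exists 0; split => [|i]; [lra|].
have [B0 HB1] := HP i0; exists (Rmax B B0); split; first exact: Rle_trans HB0 (Rmax_l _ _).
move=> i; rewrite in_cons => /orP [/eqP -> | Hi]; first exact: Pmono HB1 (Rmax_r _ _).
exact: Pmono (HB i Hi) (Rmax_l _ _).
Qed.

Lemma interval_cousin (P : R -> R -> Prop) :
  (forall t, exists r, 0 < r /\ P (t - r) (t + r)) ->
  (forall a b a' b', P a b -> a <= a' -> b' <= b -> P a' b') ->
  (forall a c b, P a c -> P c b -> P a b) ->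
  forall a b, a <= b -> P a b.
Proof.
move=> Ploc Psub Pjoin a b Hab.
pose S t := a <= t <= b /\ P a t.
have Sa : S a.
  by split; [lra | have [r [Hr Pr]] := Ploc a; apply: Psub Pr _ _; lra].
have [m [m_ub m_lub]] : {m | is_lub S m}.
  by apply: completeness; [exists b => t [[_ ?] _] | exists a].
have Ham : a <= m by apply: m_ub.
have Hmb : m <= b by apply: m_lub => t [[_ ?] _].
have [r [Hr Pm]] := Ploc m.
have [t [[Ht Pat] Htr]] : exists t, S t /\ m - r < t.
  apply: NNPP => Hn; suff : m <= m - r by lra.
  apply: m_lub => t St; apply: Rnot_lt_le => Hlt; apply: Hn; by exists t.
have Htm : t <= m by apply: m_ub.
pose b' := Rmin (m + r / 2) b.
have Pab' : P a b'.
  apply: (Pjoin a t b' Pat); apply: Psub Pm _ _; rewrite /b';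
  by have := Rmin_l (m + r / 2) b; lra.
have Hb'm : b' <= m.
  by apply: m_ub; split => //; rewrite /b' /Rmin; case: Rle_dec; lra.
have -> : b = b' by move: Hb'm; rewrite /b' /Rmin; case: Rle_dec; lra.
exact: Pab'.
Qed.

Definition fupd (I : eqType) (f : I -> R) (i : I) c := fun j => if j == i then c else f j.

Ltac fupd_tac := rewrite /fupd;
  repeat (case: eqP => [?|?]; try subst); try lra;
  try (match goal with H : is_true (?x != ?x) |- _ => by rewrite eqxx in H end);
  try congruence.

(* Cousin's lemma for boxes [lo, hi] of R^I; the induction runs over the coordinates [s]
   along which the box is not yet degenerate. *)
Lemma box_cousin_seq (I : finType) (s : seq I) (P : (I -> R) -> (I -> R) -> Prop) :
  (forall lo hi lo' hi', P lo hi -> (forall i, lo i <= lo' i) ->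
     (forall i, hi' i <= hi i) -> P lo' hi') ->
  (forall lo hi i c, P lo (fupd hi i c) -> P (fupd lo i c) hi -> P lo hi) ->
  (forall x, exists r, 0 < r /\ P (fun i => x i - r) (fun i => x i + r)) ->
  forall lo hi, (forall i, i \notin s -> lo i = hi i) -> P lo hi.
Proof.
elim: s P => [|i0 s IH] P Psub Psplit Ploc lo hi Hdeg.
  have [r [Hr Pr]] := Ploc lo; apply: (Psub _ _ _ _ Pr) => i; first lra.
  by rewrite -(Hdeg i) //; lra.
have Pslab t : exists r, 0 < r /\ P (fupd lo i0 (t - r)) (fupd hi i0 (t + r)).
  (* fix coordinate [i0] to [t] and thicken it again inside the induction hypothesis *)
  pose Q lo' hi' := exists r, 0 < r /\ P (fupd lo' i0 (t - r)) (fupd hi' i0 (t + r)).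
  have : Q (fupd lo i0 t) (fupd hi i0 t).
    apply: (IH Q).
    - move=> l h l' h' [r [Hr Pr]] Hl Hh; exists r; split => //.
      apply: (Psub _ _ _ _ Pr) => j; rewrite /fupd; case: (j == i0);
        [lra | apply: Hl | lra | apply: Hh].
    - move=> l h i c [r1 [Hr1 P1]] [r2 [Hr2 P2]].
      have Hm1 := Rmin_l r1 r2; have Hm2 := Rmin_r r1 r2.
      exists (Rmin r1 r2); split; first exact: Rmin_pos.
      case: (eqVneq i i0) => [Hi|Hi].
      + by subst i; apply: (Psub _ _ _ _ P1) => j; fupd_tac.
      + apply: (Psplit _ _ i c).
        * by apply: (Psub _ _ _ _ P1) => j; fupd_tac.
        * by apply: (Psub _ _ _ _ P2) => j; fupd_tac.
    - move=> x; have [r [Hr Pr]] := Ploc (fupd x i0 t).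
      exists (r / 2); split; first lra; exists (r / 2); split; first lra.
      by apply: (Psub _ _ _ _ Pr) => j; fupd_tac.
    - move=> j Hj; rewrite /fupd; case: eqP => // Hne; apply: Hdeg.
      by rewrite in_cons negb_or Hj andbT; apply/eqP.
  by move=> [r [Hr Pr]]; exists r; split => //; apply: (Psub _ _ _ _ Pr) => j; fupd_tac.
have Pint : forall a b, a <= b -> P (fupd lo i0 a) (fupd hi i0 b).
  apply: interval_cousin => [//|a b a' b' Pab ha hb|a c b P1 P2].
    by apply: (Psub _ _ _ _ Pab) => j; fupd_tac.
  apply: (Psplit _ _ i0 c).
    by apply: (Psub _ _ _ _ P1) => j; fupd_tac.
  by apply: (Psub _ _ _ _ P2) => j; fupd_tac.
case: (Rle_lt_dec (lo i0) (hi i0)) => Hle.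
  by apply: (Psub _ _ _ _ (Pint _ _ Hle)) => j; fupd_tac.
by apply: (Psub _ _ _ _ (Pint (hi i0) (hi i0) (Rle_refl _))) => j; fupd_tac.
Qed.

Definition locally_bounded (I : finType) (K : (I -> R) -> R) :=
  forall x0, exists r B, 0 < r /\ forall x, (forall i, Rabs (x i - x0 i) < r) -> K x <= B.

Lemma locally_bounded_on_box (I : finType) (K : (I -> R) -> R) : locally_bounded K ->
  forall M, exists B, forall x, (forall i, Rabs (x i) <= M) -> K x <= B.
Proof.
move=> HK M.
pose P (lo hi : I -> R) := exists B, forall x, (forall i, lo i <= x i <= hi i) -> K x <= B.
have [B HB] : P (fun _ => - M) (fun _ => M).
  apply: (@box_cousin_seq I (enum I)) => [lo hi lo' hi' [B HB] Hl Hh|lo hi i c [B1 H1] [B2 H2]|x|i].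
  - exists B => x Hx; apply: HB => i.
    by have := Hx i; have := Hl i; have := Hh i; lra.
  - exists (Rmax B1 B2) => x Hx; case: (Rle_lt_dec (x i) c) => Hc.
      by apply: Rle_trans (Rmax_l _ _); apply: H1 => j; have := Hx j; fupd_tac.
    by apply: Rle_trans (Rmax_r _ _); apply: H2 => j; have := Hx j; fupd_tac.
  - have [r [B [Hr HB]]] := HK x; exists (r / 2); split; first lra.
    exists B => z Hz; apply: HB => i; apply: Rabs_def1; have := Hz i; lra.
  - by rewrite mem_enum.
by exists B => x Hx; apply: HB => i; apply: Rabs_le_bounds.
Qed.

Lemma vnorm_sub_le_coords n (x x0 : vec n) r :
  (forall i, Rabs (x i - x0 i) < r) -> vnorm (vsub x x0) <= INR n * r.
Proof. by move=> H; apply: vnorm_le_box => k; apply: Rlt_le; apply: H. Qed.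

Lemma exists_step_below n dl : 0 < dl -> exists r, 0 < r /\ INR n * r < dl.
Proof.
move=> Hdl; have Hn := pos_INR n; have Hr : 0 < dl / (INR n + 1) by apply: Rdiv_lt_0_compat; lra.
exists (dl / (INR n + 1)); split => //.
have -> : INR n * (dl / (INR n + 1)) = dl - dl / (INR n + 1) by field; lra.
lra.
Qed.

Lemma Rabs_coord_le n (u v : vec n) k : Rabs (u k) <= Rabs (v k) + vnorm (vsub u v).
Proof.
have := Rabs_le_vnorm (vsub u v) k; have := Rabs_triang (v k) (u k - v k).
by rewrite /vsub (_ : v k + (u k - v k) = u k); [lra | ring].
Qed.

Lemma cont_map_locally_bounded n m (F : vec n -> vec m) k :
  cont_map F -> locally_bounded (fun x => Rabs (F x k)).
Proof.
move=> HF x0; have [dl [Hdl HD]] := HF x0 1 Rlt_0_1.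
have [r [Hr Hrdl]] := exists_step_below n Hdl.
exists r, (Rabs (F x0 k) + 1); split => // x Hx.
have := HD x ltac:(have := vnorm_sub_le_coords Hx; lra).
by have := Rabs_coord_le (F x) (F x0) k; lra.
Qed.

Lemma cont_map2_bounded_on_box p q m (F : vec p -> vec q -> vec m) : cont_map2 F -> forall M,
  exists B, forall e r k, box M e -> box M r -> Rabs (F e r k) <= B.
Proof.
move=> HF M.
suff [B [_ HB]] : exists B, 0 <= B /\ forall k e r, box M e -> box M r -> Rabs (F e r k) <= B.
  by exists B => e r k; apply: HB.
apply: exists_uniform_bound => [k B B' H HB e r He Hr|k].
  exact: Rle_trans (H e r He Hr) HB.
pose K (z : ('I_p + 'I_q)%type -> R) := Rabs (F (fun i => z (inl i)) (fun i => z (inr i)) k).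
have HK : locally_bounded K.
  move=> z0; set e0 := fun i => z0 (inl i); set r0 := fun i => z0 (inr i).
  have [dl [Hdl HD]] := HF e0 r0 1 Rlt_0_1.
  have [r [Hr Hrdl]] := exists_step_below (p + q) Hdl; rewrite plus_INR in Hrdl.
  exists r, (Rabs (F e0 r0 k) + 1); split => // z Hz.
  have H1 := vnorm_sub_le_coords (x := fun i => z (inl i)) (x0 := e0) (fun i => Hz (inl i)).
  have H2 := vnorm_sub_le_coords (x := fun i => z (inr i)) (x0 := r0) (fun i => Hz (inr i)).
  have Hclose := HD (fun i => z (inl i)) (fun i => z (inr i)) ltac:(lra).
  apply: Rle_trans (Rabs_coord_le _ (F e0 r0) k) _.
  exact: Rplus_le_compat_l (Rlt_le _ _ Hclose).
have [B HB] := locally_bounded_on_box HK M.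
exists B => e r He Hr.
by apply: (HB (fun c => match c with inl i => e i | inr i => r i end)); case.
Qed.

Lemma loclip3_bounded_on_box n1 n2 n3 m (F : vec n1 -> vec n2 -> vec n3 -> vec m) :
  loclip3 F -> forall M,
  exists B, forall x u d k, box M x -> box M u -> box M d -> Rabs (F x u d k) <= B.
Proof.
move=> HF M.
suff [B [_ HB]] : exists B, 0 <= B /\
    forall k x u d, box M x -> box M u -> box M d -> Rabs (F x u d k) <= B.
  by exists B => x u d k; apply: HB.
apply: exists_uniform_bound => [k B B' H HB x u d Hx Hu Hd|k].
  exact: Rle_trans (H x u d Hx Hu Hd) HB.
pose K (z : ('I_n1 + 'I_n2 + 'I_n3)%type -> R) :=
  Rabs (F (fun i => z (inl (inl i))) (fun i => z (inl (inr i))) (fun i => z (inr i)) k).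
have HK : locally_bounded K.
  move=> z0; set x0 := fun i => z0 (inl (inl i)); set u0 := fun i => z0 (inl (inr i)).
  set d0 := fun i => z0 (inr i).
  have [rad [L [Hrad HL]]] := HF x0 u0 d0.
  have [r [Hr Hrrad]] := exists_step_below (n1 + n2 + n3) Hrad; rewrite !plus_INR in Hrrad.
  exists r, (Rabs (F x0 u0 d0 k) + Rabs L * rad); split => // z Hz.
  set x1 := fun i => z (inl (inl i)); set u1 := fun i => z (inl (inr i)).
  set d1 := fun i => z (inr i).
  have H1 := vnorm_sub_le_coords (x := x1) (x0 := x0) (fun i => Hz (inl (inl i))).
  have H2 := vnorm_sub_le_coords (x := u1) (x0 := u0) (fun i => Hz (inl (inr i))).
  have H3 := vnorm_sub_le_coords (x := d1) (x0 := d0) (fun i => Hz (inr i)).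
  have Hlip := HL x1 u1 d1 x0 u0 d0 ltac:(lra) ltac:(rewrite !vnorm_sub_diag; lra).
  have Hdist : L * (vnorm (vsub x1 x0) + vnorm (vsub u1 u0) + vnorm (vsub d1 d0)) <= Rabs L * rad.
    have := vnorm_ge0 (vsub x1 x0); have := vnorm_ge0 (vsub u1 u0).
    have := vnorm_ge0 (vsub d1 d0); have := Rle_abs L; have := Rabs_pos L; nra.
  apply: Rle_trans (Rabs_coord_le _ (F x0 u0 d0) k) _.
  exact: Rplus_le_compat_l (Rle_trans _ _ _ Hlip Hdist).
have [B HB] := locally_bounded_on_box HK M.
exists B => x u d Hx Hu Hd.
apply: (HB (fun c => match c with inl (inl i) => x i | inl (inr i) => u i | inr i => d i end)).
by case => [[]|].
Qed.

Lemma vupd_id n (v : vec n) k : vupd v k (v k) = v.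
Proof. by apply: functional_extensionality => j; rewrite /vupd; case: eqP => [->|]. Qed.

Lemma vupd_at n (v : vec n) k c : vupd v k c k = c.
Proof. by rewrite /vupd eqxx. Qed.

Lemma vupd_vupd n (v : vec n) k c c' : vupd (vupd v k c) k c' = vupd v k c'.
Proof. by apply: functional_extensionality => j; rewrite /vupd; case: (j == k). Qed.

Section GradientLipschitz.
Variables (n : nat) (F : vec n -> R) (G : vec n -> vec n) (M B : R).
Hypothesis F_partial : forall x k, derivable_pt_lim (fun s => F (vupd x k s)) (x k) (G x k).
Hypothesis G_bounded : forall x k, box M x -> Rabs (G x k) <= B.

Lemma partial_increment_le z k c c' : box M z -> Rabs c <= M -> Rabs c' <= M ->
  Rabs (F (vupd z k c) - F (vupd z k c')) <= B * Rabs (c - c').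
Proof.
move=> Hz Hc Hc'.
apply: (MVT_Rabs_le (F := fun s => F (vupd z k s)) (F' := fun s => G (vupd z k s) k)) => t Ht.
split.
  have := F_partial (vupd z k t) k; rewrite vupd_at.
  have -> // : (fun s => F (vupd (vupd z k t) k s)) = (fun s => F (vupd z k s)).
  by apply: functional_extensionality => s; rewrite vupd_vupd.
apply: G_bounded => i; rewrite /vupd; case: (i == k); last exact: Hz.
have := Rabs_le_bounds Hc; have := Rabs_le_bounds Hc'.
have := Rmin_l c c'; have := Rmin_r c c'; have := Rmax_l c c'; have := Rmax_r c c'.
have := Rmin_glb c c' (- M); have := Rmax_lub c c' M.
by move=> *; apply: Rabs_le; lra.
Qed.

(* Telescoping, with the mean value theorem applied to one coordinate at a time. *)
Lemma gradient_lipschitz_on_box x x' : box M x -> box M x' ->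
  Rabs (F x - F x') <= B * norm1 (vsub x x').
Proof.
move=> Hx Hx'.
pose between (m : nat) : vec n := fun k => if (k < m)%nat then x' k else x k.
pose dist (m : nat) := rsum (fun k : 'I_n => if (k < m)%nat then Rabs (x k - x' k) else 0).
have between_box m : box M (between m) by move=> k; rewrite /between; case: ltnP.
suff /(_ n (leqnn n)) : forall m, (m <= n)%nat -> Rabs (F x - F (between m)) <= B * dist m.
  have -> : between n = x' by apply: functional_extensionality => k; rewrite /between ltn_ord.
  have -> : dist n = norm1 (vsub x x') by apply: eq_bigr => k _; rewrite ltn_ord.
  by apply.
elim => [_|m IH Hm].
  have -> : between 0%nat = x by apply: functional_extensionality.
  have -> : dist 0%nat = 0.
    by rewrite -(Rmult_0_r (INR n)) -rsum_const; apply: eq_bigr => k _; rewrite ltn0.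
  by rewrite Rminus_diag Rabs_R0; lra.
pose km := Ordinal Hm.
have lt_succ k : k != km -> (k < m.+1)%nat = (k < m)%nat.
  move=> Hk; rewrite ltnS leq_eqVlt; suff -> : (nat_of_ord k == m) = false by [].
  by apply/negbTE; apply: contra Hk => /eqP E; apply/eqP/val_inj.
have step : between m.+1 = vupd (between m) km (x' km).
  apply: functional_extensionality => k; rewrite /between /vupd.
  by case: (eqVneq k km) => [->|Hk]; rewrite ?ltnSn // lt_succ.
have dist_step : dist m.+1 = dist m + Rabs (x km - x' km).
  rewrite /dist -(rsum_delta km (Rabs (x km - x' km))) -rsumD; apply: eq_bigr => k _.
  case: (eqVneq k km) => [->|Hk]; first by rewrite /= ltnSn ltnn; lra.
  by rewrite lt_succ //; lra.
have Hinc := partial_increment_le km (between_box m) (Hx km) (Hx' km).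
rewrite -step (_ : vupd (between m) km (x km) = between m) in Hinc; last first.
  rewrite -{2}(vupd_id (between m) km); congr vupd.
  by rewrite /between /= ltnn.
have := IH (ltnW Hm); have := Rabs_triang (F x - F (between m)) (F (between m) - F (between m.+1)).
rewrite dist_step (_ : F x - F (between m) + _ = F x - F (between m.+1)); last ring.
lra.
Qed.

End GradientLipschitz.

Lemma C1map_lipschitz_on_box n q (h : vec n -> vec q) : C1map h -> forall M,
  exists L, 0 <= L /\
    forall j x x', box M x -> box M x' -> Rabs (h x j - h x' j) <= L * norm1 (vsub x x').
Proof.
move=> Hh M; apply: exists_uniform_bound => [j L L' H HL x x' Hx Hx'|j].
  apply: Rle_trans (H x x' Hx Hx') _; apply: Rmult_le_compat_r => //.
  by apply: rsum_ge0 => k; apply: Rabs_pos.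
have [G [HD HG]] := Hh j.
have [B [_ HB]] : exists B, 0 <= B /\ forall k x, box M x -> Rabs (G x k) <= B.
  apply: exists_uniform_bound => [k B B' H HB x Hx|k]; first exact: Rle_trans (H x Hx) HB.
  exact: locally_bounded_on_box (cont_map_locally_bounded k HG) M.
by exists B; apply: gradient_lipschitz_on_box => // x k; apply: HB.
Qed.

Lemma Rabs_mult_le a b A B : Rabs a <= A -> Rabs b <= B -> Rabs (a * b) <= A * B.
Proof. by move=> Ha Hb; rewrite Rabs_mult; apply: Rmult_le_compat => //; apply: Rabs_pos. Qed.

Lemma Rabs_matvec_le q m (A : 'I_q -> 'I_m -> R) (v : vec m) B k :
  box B v -> Rabs (matvec A v k) <= rsum (fun l => Rabs (A k l)) * B.
Proof.
move=> Hv; rewrite Rmult_comm -rsum_mull; apply: Rle_trans (Rabs_rsum_le _) _.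
by apply: rsum_le => l; rewrite Rmult_comm; apply: Rabs_mult_le; [apply: Hv | lra].
Qed.

Lemma Rabs_incid_le N E a (ends : 'I_E -> 'I_N * 'I_N) i g :
  0 <= a -> Rabs (incid a ends i g) <= sqrt a.
Proof.
move=> Ha; have Hs := sqrt_pos a; rewrite /incid.
case: eqP => _; first by rewrite Rabs_Ropp Rabs_right; lra.
by case: eqP => _; [rewrite Rabs_right | rewrite Rabs_R0]; lra.
Qed.

Lemma incid_rsum N E a (ends : 'I_E -> 'I_N * 'I_N) g (i j : 'I_N) (Y : 'I_N -> R) :
  ends g = (i, j) -> i <> j -> rsum (fun l => incid a ends l g * Y l) = sqrt a * (Y j - Y i).
Proof.
move=> Hg Hij.
have -> : rsum (fun l => incid a ends l g * Y l) =
          rsum (fun l => (if l == i then - sqrt a * Y i else 0) +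
                         (if l == j then sqrt a * Y j else 0)).
  apply: eq_bigr => l _; rewrite /incid Hg /=.
  by case: eqP => [E1|E1]; case: eqP => [E2|E2]; subst; try congruence; ring.
by rewrite rsumD !rsum_delta; ring.
Qed.

Lemma derivable_pt_lim_dot_self n (v : R -> vec n) t dv : has_deriv v t dv ->
  derivable_pt_lim (fun s => dot (v s) (v s)) t (2 * dot (v t) dv).
Proof.
move=> Hv; have -> : 2 * dot (v t) dv = rsum (fun k => dv k * v t k + v t k * dv k).
  by rewrite /dot -rsum_mull; apply: eq_bigr => k _; ring.
by apply: derivable_pt_lim_rsum => k; apply: derivable_pt_lim_mult.
Qed.

Lemma exo_dot_nonincreasing m (s : vec m -> vec m) (w : R -> vec m) t0 t : exo_ok s ->
  (forall t, 0 < t -> has_deriv w t (s (w t))) -> 0 < t0 <= t ->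
  dot (w t) (w t) <= dot (w t0) (w t0).
Proof.
move=> [_ [s0 s_mono]] Hw Ht.
suff : dot (w t) (w t) - dot (w t0) (w t0) <= 0 * (t - t0) by lra.
apply: (@MVT_upper (fun r => dot (w r) (w r)) (fun r => 2 * dot (w r) (s (w r)))) => [|c Hc];
  first lra.
split; first by apply: derivable_pt_lim_dot_self; apply: Hw; lra.
have := s_mono (w c) (@vzero m).
have -> : dot (vsub (w c) (@vzero m)) (vsub (s (w c)) (s (@vzero m))) = dot (w c) (s (w c)).
  by apply: eq_bigr => k _; rewrite /vsub s0 /vzero; ring.
lra.
Qed.

Lemma lipschitz_after_sub t0 L (F G : R -> R) :
  lipschitz_after t0 L F -> lipschitz_after t0 L G ->
  lipschitz_after t0 (2 * L) (fun t => F t - G t).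
Proof.
move=> HF HG t t' Ht Ht'; have := HF t t' Ht Ht'; have := HG t t' Ht Ht'.
have := Rabs_triang (F t - F t') (- (G t - G t')); rewrite Rabs_Ropp.
by rewrite (_ : F t - F t' + - (G t - G t') = F t - G t - (F t' - G t')); [lra | ring].
Qed.

Lemma dot_self_lipschitz n (v : R -> vec n) t0 B L :
  (forall t, t0 <= t -> box B (v t)) -> (forall k, lipschitz_after t0 L (fun t => v t k)) ->
  lipschitz_after t0 (INR n * (2 * B * L)) (fun t => dot (v t) (v t)).
Proof.
move=> Hbox Hlip t t' Ht Ht'; rewrite /dot -rsumB.
apply: Rle_trans (Rabs_rsum_le _) _.
rewrite Rmult_assoc -rsum_const; apply: rsum_le => k.
rewrite (_ : v t k * v t k - v t' k * v t' k = (v t k - v t' k) * (v t k + v t' k)); last ring.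
apply: Rle_trans (Rabs_mult_le (Hlip k t t' Ht Ht') (_ : Rabs (v t k + v t' k) <= 2 * B)) _.
  by have := Rabs_triang (v t k) (v t' k); have := Hbox t Ht k; have := Hbox t' Ht' k; lra.
by right; ring.
Qed.

Section ClosedLoop.
(* keeps the node/edge index explicit in hypotheses such as [exo i] and [Rm i] *)
Unset Implicit Arguments.
Variables (n q N E : nat) (m : 'I_N -> nat) (p : 'I_E -> nat).
Variables (f : vec n -> vec q -> vec q -> vec n) (h : vec n -> vec q).
Variables (s : forall i : 'I_N, vec (m i) -> vec (m i)).
Variables (Rm : forall i : 'I_N, 'I_q -> 'I_(m i) -> R).
Variables (a : R) (ends : 'I_E -> 'I_N * 'I_N).
Variables (phi : forall g : 'I_E, vec (p g) -> vec q -> vec q) (delta : 'I_E -> R).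
Variables (x : 'I_N -> R -> vec n) (w : forall i : 'I_N, R -> vec (m i)).
Variables (eta : forall g : 'I_E, R -> vec (p g)) (xi : forall i : 'I_N, R -> vec (m i)).
Variables (kappa : 'I_E -> R -> R) (M : R).

Definition output (i : 'I_N) (t : R) := h (x i t).
Definition disturbance (i : 'I_N) (t : R) := matvec (Rm i) (w i t).
Definition edge_diff (g : 'I_E) (t : R) : vec q :=
  fun k => rsum (fun j => incid a ends j g * output j t k).
Definition edge_passive_out (g : 'I_E) (t : R) := phi g (eta g t) (edge_diff g t).
Definition edge_adaptive_out (g : 'I_E) (t : R) : vec q := fun k => kappa g t * edge_diff g t k.
Definition control (i : 'I_N) (t : R) : vec q := fun k =>
  - matvec (Rm i) (xi i t) k
  - rsum (fun g => incid a ends i g * (edge_passive_out g t k + edge_adaptive_out g t k)).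

Hypothesis f_loclip : loclip3 f.
Hypothesis h_C1 : C1map h.
Hypothesis exo : forall i, exo_ok (s i).
Hypothesis a_pos : 0 < a.
Hypothesis edges_complete :
  forall i j : 'I_N, i <> j -> exists g, ends g = (i, j) \/ ends g = (j, i).
Hypothesis phi_cont : forall g, cont_map2 (phi g).
Hypothesis delta_pos : forall g, 0 < delta g.
Hypothesis w_ode : forall i t, 0 < t -> has_deriv (w i) t (s i (w i t)).
Hypothesis x_ode :
  forall i t, 0 < t -> has_deriv (x i) t (f (x i t) (control i t) (disturbance i t)).
Hypothesis kappa_ode :
  forall g t, 0 < t -> derivable_pt_lim (kappa g) t (delta g * dot (edge_diff g t) (edge_diff g t)).
Hypothesis bounded : forall t, 0 < t ->
  (forall i, vnorm (x i t) <= M /\ vnorm (xi i t) <= M) /\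
  (forall g, vnorm (eta g t) <= M /\ Rabs (kappa g t) <= M).

(* [M] may be negative when there are no nodes and no edges, hence the boxes of size [Rabs M];
   all estimates live on [1, +oo), a closed half-line on which the trajectory is differentiable. *)
Lemma x_box l t : 1 <= t -> box (Rabs M) (x l t).
Proof.
move=> Ht; have [Hnode _] := bounded t ltac:(lra).
exact: box_of_vnorm (Rle_trans _ _ _ (proj1 (Hnode l)) (Rle_abs M)).
Qed.

Lemma xi_box l t : 1 <= t -> box (Rabs M) (xi l t).
Proof.
move=> Ht; have [Hnode _] := bounded t ltac:(lra).
exact: box_of_vnorm (Rle_trans _ _ _ (proj2 (Hnode l)) (Rle_abs M)).
Qed.

Lemma eta_box g t : 1 <= t -> box (Rabs M) (eta g t).
Proof.
move=> Ht; have [_ Hedge] := bounded t ltac:(lra).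
exact: box_of_vnorm (Rle_trans _ _ _ (proj1 (Hedge g)) (Rle_abs M)).
Qed.

Lemma Rabs_kappa_le g t : 1 <= t -> Rabs (kappa g t) <= Rabs M.
Proof.
move=> Ht; have [_ Hedge] := bounded t ltac:(lra).
exact: Rle_trans (proj2 (Hedge g)) (Rle_abs M).
Qed.

Lemma Rm_rowsum_le : exists Rb, 0 <= Rb /\ forall l k, rsum (fun c => Rabs (Rm l k c)) <= Rb.
Proof.
apply: exists_uniform_bound => [l B B' H HB k|l]; first exact: Rle_trans (H k) HB.
have [B [_ HB]] : exists B, 0 <= B /\ forall k, rsum (fun c => Rabs (Rm l k c)) <= B.
  by apply: exists_uniform_bound => [k B B' H1 H2|k]; [lra | eexists; apply: Rle_refl].
by exists B.
Qed.

Lemma disturbance_box : exists Bd, forall l t, 1 <= t -> box Bd (disturbance l t).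
Proof.
have [Rb [_ HRb]] := Rm_rowsum_le.
have [Bw [Bw0 HBw]] : exists Bw, 0 <= Bw /\ forall l t, 1 <= t -> box Bw (w l t).
  apply: exists_uniform_bound => [l B B' H HB t Ht|l]; first exact: box_le (H t Ht) HB.
  exists (vnorm (w l 1)) => t Ht; apply: box_of_vnorm; apply: sqrt_le_1_alt.
  by apply: (exo_dot_nonincreasing (exo l) (w_ode l)); lra.
exists (Rb * Bw) => l t Ht k; apply: Rle_trans (Rabs_matvec_le _ k (HBw l t Ht)) _.
exact: Rmult_le_compat_r.
Qed.

Lemma output_box : exists By, forall l t, 1 <= t -> box By (output l t).
Proof.
have [Lh [Lh0 HLh]] := C1map_lipschitz_on_box h_C1 (Rabs M).
have [B0 [_ HB0]] : exists B0, 0 <= B0 /\ forall k, Rabs (h (@vzero n) k) <= B0.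
  by apply: exists_uniform_bound => [k B B' H1 H2|k]; [lra | eexists; apply: Rle_refl].
exists (B0 + Lh * (INR n * Rabs M)) => l t Ht k.
have zero_box : box (Rabs M) (@vzero n) by move=> j; rewrite /vzero Rabs_R0; apply: Rabs_pos.
have Hdist : norm1 (vsub (x l t) (@vzero n)) <= INR n * Rabs M.
  by apply: norm1_le_box => j; rewrite /vsub /vzero Rminus_0_r; apply: x_box.
have := HLh k _ _ (x_box l t Ht) zero_box; have := Rabs_triang_inv (h (x l t) k) (h (@vzero n) k).
have := HB0 k; have := Rmult_le_compat_l _ _ _ Lh0 Hdist; rewrite /output; lra.
Qed.

Lemma edge_diff_box : exists Bv, forall g t, 1 <= t -> box Bv (edge_diff g t).
Proof.
have [By HBy] := output_box.
exists (INR N * (sqrt a * By)) => g t Ht k.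
apply: Rle_trans (Rabs_rsum_le _) _; rewrite -rsum_const; apply: rsum_le => l.
by apply: Rabs_mult_le; [apply: Rabs_incid_le; lra | apply: HBy].
Qed.

Lemma edge_passive_out_box : exists Bp, forall g t, 1 <= t -> box Bp (edge_passive_out g t).
Proof.
have [Bv HBv] := edge_diff_box.
have [Bp [_ HBp]] : exists Bp, 0 <= Bp /\ forall g t, 1 <= t -> box Bp (edge_passive_out g t).
  apply: exists_uniform_bound => [g B B' H HB t Ht|g]; first exact: box_le (H t Ht) HB.
  have [B HB] := cont_map2_bounded_on_box (phi_cont g) (Rmax (Rabs M) Bv).
  exists B => t Ht k; rewrite /edge_passive_out; apply: HB.
    exact: box_le (eta_box g t Ht) (Rmax_l _ _).
  exact: box_le (HBv g t Ht) (Rmax_r _ _).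
by exists Bp.
Qed.

Lemma control_box : exists Bu, forall l t, 1 <= t -> box Bu (control l t).
Proof.
have [Rb [_ HRb]] := Rm_rowsum_le.
have [Bv HBv] := edge_diff_box; have [Bp HBp] := edge_passive_out_box.
exists (Rb * Rabs M + INR E * (sqrt a * (Bp + Rabs M * Bv))) => l t Ht k.
rewrite /control /Rminus; apply: Rle_trans (Rabs_triang _ _) _; rewrite !Rabs_Ropp.
apply: Rplus_le_compat.
  apply: Rle_trans (Rabs_matvec_le _ k (xi_box l t Ht)) _.
  exact: Rmult_le_compat_r (Rabs_pos M) (HRb l k).
apply: Rle_trans (Rabs_rsum_le _) _; rewrite -rsum_const; apply: rsum_le => g.
apply: Rabs_mult_le; first by apply: Rabs_incid_le; lra.
apply: Rle_trans (Rabs_triang _ _) (Rplus_le_compat _ _ _ _ (HBp g t Ht k) _).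
exact: Rabs_mult_le (Rabs_kappa_le g t Ht) (HBv g t Ht k).
Qed.

Lemma state_lipschitz : exists Bf, forall l k, lipschitz_after 1 Bf (fun t => x l t k).
Proof.
have [Bu HBu] := control_box; have [Bd HBd] := disturbance_box.
have [Bf HBf] := loclip3_bounded_on_box f_loclip (Rmax (Rabs M) (Rmax Bu Bd)).
exists Bf => l k.
apply: (lipschitz_after_of_deriv (F' := fun t => f (x l t) (control l t) (disturbance l t) k)).
move=> t Ht; split; first by apply: x_ode; lra.
apply: HBf; first exact: box_le (x_box l t Ht) (Rmax_l _ _).
  exact: box_le (HBu l t Ht) (Rle_trans _ _ _ (Rmax_l _ _) (Rmax_r _ _)).
exact: box_le (HBd l t Ht) (Rle_trans _ _ _ (Rmax_r _ _) (Rmax_r _ _)).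
Qed.

Lemma output_lipschitz : exists Ly, forall l k, lipschitz_after 1 Ly (fun t => output l t k).
Proof.
have [Lh [Lh0 HLh]] := C1map_lipschitz_on_box h_C1 (Rabs M).
have [Bf HBf] := state_lipschitz.
exists (Lh * (INR n * Bf)) => l k t t' Ht Ht'.
apply: Rle_trans (HLh k _ _ (x_box l t Ht) (x_box l t' Ht')) _.
rewrite !Rmult_assoc; apply: Rmult_le_compat_l => //.
by apply: norm1_le_box => j; apply: HBf.
Qed.

Lemma edge_diff_dot g i j t : ends g = (i, j) \/ ends g = (j, i) -> i <> j ->
  dot (edge_diff g t) (edge_diff g t) =
  a * dot (vsub (output i t) (output j t)) (vsub (output i t) (output j t)).
Proof.
move=> Hg Hij; rewrite /dot -rsum_mull; apply: eq_bigr => k _.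
have Hsq : sqrt a * sqrt a = a by apply: sqrt_sqrt; lra.
case: Hg => Hg.
  rewrite /edge_diff (incid_rsum a (fun l => output l t k) Hg Hij) /vsub -[in RHS]Hsq; ring.
have Hji : j <> i by apply: not_eq_sym.
rewrite /edge_diff (incid_rsum a (fun l => output l t k) Hg Hji) /vsub -[in RHS]Hsq; ring.
Qed.

Lemma outputs_synchronize i j eps : 0 < eps ->
  exists T, 0 < T /\ forall t, T <= t -> vnorm (vsub (output i t) (output j t)) < eps.
Proof.
move=> Heps; case: (eqVneq i j) => [<-|/eqP Hij].
  by exists 1; split => [|t _]; [lra | rewrite vnorm_sub_diag].
have [g Hg] := edges_complete i j Hij.
pose Z t := dot (vsub (output i t) (output j t)) (vsub (output i t) (output j t)).
have [By HBy] := output_box; have [Ly HLy] := output_lipschitz.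
have Zlip : lipschitz_after 1 (INR q * (2 * (2 * By) * (2 * Ly))) Z.
  apply: dot_self_lipschitz => [t Ht k|k]; last exact: lipschitz_after_sub.
  have := Rabs_triang (output i t k) (- output j t k); rewrite Rabs_Ropp.
  by have := HBy i t Ht k; have := HBy j t Ht k; rewrite /vsub /Rminus; lra.
have Zrate t : 1 <= t -> derivable_pt_lim (kappa g) t (delta g * a * Z t).
  by move=> Ht; rewrite Rmult_assoc -(edge_diff_dot g i j t Hg Hij); apply: kappa_ode; lra.
have kappa_ub t : 1 <= t -> kappa g t <= Rabs M.
  by move=> Ht; apply: Rle_trans (Rle_abs _) (Rabs_kappa_le g t Ht).
have rate_pos : 0 < delta g * a by apply: Rmult_lt_0_compat.
have [T [HT HZ]] := barbalat rate_pos Zrate (fun t _ => dot_ge0 _) Zlip kappa_ub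
  (Rmult_lt_0_compat _ _ Heps Heps).
exists T; split => [|t Ht]; first lra.
rewrite /vnorm -(sqrt_square eps); last lra.
by apply: sqrt_lt_1_alt; split; [apply: dot_ge0 | apply: HZ].
Qed.

End ClosedLoop.

Arguments outputs_synchronize {n q N E m p f h s Rm a ends phi delta x w eta xi kappa M}.

Theorem corollary2
  (n q N E : nat) (m : 'I_N -> nat) (p : 'I_E -> nat)
  (f : vec n -> vec q -> vec q -> vec n) (h : vec n -> vec q) (sigma : R)
  (s : forall i : 'I_N, vec (m i) -> vec (m i))
  (Rm : forall i : 'I_N, 'I_q -> 'I_(m i) -> R)
  (a : R) (ends : 'I_E -> 'I_N * 'I_N)
  (psi : forall g : 'I_E, vec (p g) -> vec q -> vec (p g))
  (phi : forall g : 'I_E, vec (p g) -> vec q -> vec q)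
  (delta : 'I_E -> R)
  (x : 'I_N -> R -> vec n) (w : forall i : 'I_N, R -> vec (m i))
  (eta : forall g : 'I_E, R -> vec (p g)) (xi : forall i : 'I_N, R -> vec (m i))
  (kappa : 'I_E -> R -> R) :
  loclip3 f -> C1map h -> iOFP f h sigma ->
  (forall i, exo_ok (s i)) ->
  0 < a -> complete_edges ends ->
  (forall g, passive_edge (psi g) (phi g)) ->
  (forall g, 0 < delta g) ->
  let y i t := h (x i t) in
  let d i t := matvec (Rm i) (w i t) in
  let rho i t : vec q := fun k => rsum (fun j => adjw a i j * (y j t k - y i t k)) in
  let vr g t : vec q := fun k => rsum (fun j => incid a ends j g * y j t k) in
  let v1 g t := phi g (eta g t) (vr g t) in
  let v2 g t : vec q := fun k => kappa g t * vr g t k in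
  let u i t : vec q := fun k =>
      - matvec (Rm i) (xi i t) k - rsum (fun g => incid a ends i g * (v1 g t k + v2 g t k)) in
  (forall i t, 0 < t -> has_deriv (w i) t (s i (w i t))) ->
  (forall i t, 0 < t -> has_deriv (x i) t (f (x i t) (u i t) (d i t))) ->
  (forall g t, 0 < t -> has_deriv (eta g) t (psi g (eta g t) (vr g t))) ->
  (forall i t, 0 < t -> has_deriv (xi i) t (vsub (s i (xi i t)) (matTvec (Rm i) (rho i t)))) ->
  (forall g t, 0 < t -> derivable_pt_lim (kappa g) t (delta g * dot (vr g t) (vr g t))) ->
  (exists M, forall t, 0 < t ->
     (forall i, vnorm (x i t) <= M /\ vnorm (xi i t) <= M) /\
     (forall g, vnorm (eta g t) <= M /\ Rabs (kappa g t) <= M)) ->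
  forall i j eps, 0 < eps ->
    exists T, 0 < T /\ forall t, T <= t -> vnorm (vsub (y i t) (y j t)) < eps.
Proof.
move=> f_loclip h_C1 _ exo a_pos [_ [edges_complete _]] passive delta_pos
  y d rho vr v1 v2 u w_ode x_ode _ _ kappa_ode [M bounded].
have phi_cont g : cont_map2 (phi g) by have [_ [Hphi _]] := passive g.
exact: (outputs_synchronize f_loclip h_C1 exo a_pos edges_complete phi_cont delta_pos
  w_ode x_ode kappa_ode bounded).
Qed.
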